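(* Let $\gamma\ge1$, $t\ge1$ an integer, $\varepsilon\in(0,1)$, and $B$ with $\gamma t\le B\le|A|$. Let $(x,y,p)$ be a $\gamma t$-SLEO with income distribution $\mathcal{I}$ uniform on $[1-\varepsilon,1]$ and total budget $B$, and let $C\subseteq A$ with $|C|\ge t$ contain every $a\in A$ with $y_a=1$. Then for every $c\in A\setminus C$: (i) $\sum_{v\in V}p_{v,c}\le \gamma t\cdot|V|\cdot\frac1B\cdot\mathbb{E}_{b\sim\mathcal{I}}[b]$; (ii) the number of voters $v$ that are $t$-covered by $C$ and satisfy $c\succ_v^t C$ is at most $\frac{\gamma t}{B(1-\varepsilon)}\cdot|V|$.
   Context: An election $(V,A,\succ)$: finite nonempty voter set $V$, finite candidate set $A$, strict linear order $\succ_v$ on $A$ per voter, extended to $A\cup\{\emptyset\}$ with $\emptyset$ strictly below all candidates. For $C\subseteq A$ with $|C|\ge t$ and $a\in A\setminus C$: $C\succ_v^t a$ iff $|\{c\in C: c\succ_v a\}|\ge t$, otherwise $a\succ_v^t C$. Given prices $p_v\in[0,1]^{A\cup\{\emptyset\}}$ with $p_{v,\emptyset}=0$ and income $b\ge0$, voter $v$'s demand is the $\succ_v$-maximal element of $\{a\in A\cup\{\emptyset\}: p_{v,a}\le b\}$; $\mathcal{D}_v(p_v,\mathcal{I})$ is this demand with $b\sim\mathcal{I}$. For $s>0$, $B>0$, an $s$-SLEO $(x,y,p)$ with income $\mathcal{I}$ and budget $B$: prices $p_v\in[0,1]^{A\cup\{\emptyset\}}$ with $p_{v,\emptyset}=0$,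 consumptions $x_v\in[0,1]^{A\cup\{\emptyset\}}$, and $y\in[0,1]^A$, with (1) $x_{v,a}=\Pr[\mathcal{D}_v(p_v,\mathcal{I})=a]$ for all $a\in A\cup\{\emptyset\}$; (2) $s\,x_{v,a}\le y_a$ for all $a\in A$, and $p_{v,a}=0$ whenever $s\,x_{v,a}<y_a$; (3) $y$ maximizes $\sum_a(\sum_v p_{v,a})z_a$ over $z\in[0,1]^A$ with $\sum_a z_a=B$. The boundary candidate of $v$ is $a_v=$ the $\succ_v$-maximal element of $\{a\in A\cup\{\emptyset\}: p_{v,a}\le1-\varepsilon\}$. A voter $v$ is $t$-covered by $C$ if $|\{c\in C: c\succ_v a_v\}|\ge t$. *)

From HB Require Import structures.
From mathcomp Require Import all_boot all_order all_algebra.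
From mathcomp Require Import all_classical all_reals all_analysis.
From mathcomp Require Import uniform_distribution.
Set Implicit Arguments. Unset Strict Implicit. Unset Printing Implicit Defensive.
Import Order.TTheory GRing.Theory Num.Theory.

Local Open Scope ring_scope.

Definition strict_linear_order (T : finType) (r : rel T) : Prop :=
  irreflexive r /\ transitive r /\ (forall a b, a != b -> r a b || r b a).

(* A ∪ {∅} is modelled by [option A], with [None] = ∅.
   Extension of a voter's order: ∅ strictly below every candidate. *)
Definition prefE (A : finType) (pref : rel A) : rel (option A) :=
  fun o o' => match o, o' with
              | Some a, Some b => pref a b
              | Some _, None => true
              | None, _ => false
              end.

(* Demand: the ≻-maximal element of {o : pv o <= b} (∅ if no such maximum
   exists, which cannot happen when pref is a strict linear order,
   pv None = 0 and b >= 0). *)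
Definition demand (R : realType) (A : finType) (pref : rel A)
  (pv : option A -> R) (b : R) : option A :=
  odflt None [pick o | (pv o <= b) &&
     [forall o', (pv o' <= b) ==> ((o' == o) || prefE pref o o')]].

(* C ≻^t a  iff  |{c ∈ C : c ≻ a}| >= t.  (a ≻^t C is its negation.) *)
Definition tbeats (A : finType) (pref : rel A) (t : nat) (C : {set A}) (a : A)
  : bool := (t <= #|[set c in C | pref c a]|)%N.

Definition boundary (R : realType) (A : finType) (pref : rel A)
  (pv : option A -> R) (eps : R) : option A := demand pref pv (1 - eps).

Definition t_covered (R : realType) (A : finType) (pref : rel A)
  (pv : option A -> R) (eps : R) (t : nat) (C : {set A}) : bool :=
  (t <= #|[set c in C | prefE pref (Some c) (boundary pref pv eps)]|)%N.

Lemma income_lt (R : realType) (eps : R) : 0 < eps -> 1 - eps < 1.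
Proof. by move=> h; rewrite ltrBlDr ltrDl. Qed.

Definition Income (R : realType) (eps : R) (h : 0 < eps) :=
  uniform_prob (income_lt h).

Definition is_SLEO (R : realType) (V A : finType) (pref : V -> rel A)
  (s B eps : R) (h : 0 < eps)
  (p : V -> option A -> R) (x : V -> option A -> R) (y : A -> R) : Prop :=
  0 < s /\ 0 < B /\
   ((forall v o, 0 <= p v o <= 1) /\ (forall v, p v None = 0)) /\
   ((forall v o, 0 <= x v o <= 1) /\ (forall a, 0 <= y a <= 1)) /\
   (forall v o, ((x v o)%:E =
        Income h [set b | demand (pref v) (p v) b == o]%classic)%E) /\
   ((forall v a, s * x v (Some a) <= y a) /\
    (forall v a, s * x v (Some a) < y a -> p v (Some a) = 0)) /\
   ((\sum_a y a = B) /\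
   (forall z : A -> R, (forall a, 0 <= z a <= 1) -> \sum_a z a = B ->
      \sum_a (\sum_v p v (Some a)) * z a <=
      \sum_a (\sum_v p v (Some a)) * y a)).

From HB Require Import structures.
From mathcomp Require Import all_boot all_order all_algebra.
From mathcomp Require Import all_classical all_reals all_analysis.
From mathcomp Require Import uniform_distribution measurable_realfun.
From mathcomp Require Import ring lra.
Set Implicit Arguments. Unset Strict Implicit. Unset Printing Implicit Defensive.
Import Order.TTheory GRing.Theory Num.Theory.
Local Open Scope ring_scope.

(* (i) Since [y] maximizes revenue and [y_c < 1] (as [c] is not in [C]), moving mass from
   any [a] with [y_a > 0] to [c] cannot increase revenue: the total price [P_c] of [c] is at
   most that of every such [a], hence [P_c B <= sum_a P_a y_a].  By complementary slackness
   this sum is [gamma t] times the total expected spending, and every voter spends at most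
   her expected income [E b].
   (ii) A [t]-covered voter for whom [c] beats [C] must price [c] above [1 - eps], so
   [(1 - eps)] times their number is at most [P_c <= gamma t |V| / B]. *)

Lemma strict_linear_order_prefE (A : finType) (pref : rel A) :
  strict_linear_order pref -> strict_linear_order (prefE pref).
Proof.
move=> [irr [tr tot]]; split; [|split].
- by case=> [a|] //=; apply: irr.
- by move=> [b|] [a|] [c|] //=; exact: tr.
- by move=> [a|] [b|] //= ab; apply: tot; apply: contra ab => /eqP ->.
Qed.

Lemma strict_linear_order_max (T : finType) (r : rel T) (P : pred T) x0 :
  strict_linear_order r -> P x0 ->
  exists2 m, P m & forall o, P o -> (o == m) || r m o.
Proof.
move=> [irr [tr tot]] Px0.
have [m Pm mmax] := arg_maxnP (fun o => #|[set o' | r o o']|) Px0.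
exists m => // o Po; case: (eqVneq o m) => //= ne.
have /orP[r_om|//] := tot _ _ ne.
have : (#|[set o' | r m o']| < #|[set o' | r o o']|)%N.
  apply: proper_card; apply/properP; split.
    by apply/fintype.subsetP => z; rewrite !inE; exact: tr.
  by exists m; rewrite !inE ?irr.
by rewrite ltnNge (mmax o Po : _ <= _)%N.
Qed.

Section demand.
Variables (R : realType) (A : finType) (pref : rel A) (pv : option A -> R).
Hypothesis pv_None : pv None = 0.

Lemma demand_affordable b : 0 <= b -> pv (demand pref pv b) <= b.
Proof.
by move=> b0; rewrite /demand; case: pickP => [d /andP[affordable _]|_] //=; rewrite pv_None.
Qed.

Lemma demand_maximal b : strict_linear_order pref -> 0 <= b ->
  forall o, pv o <= b -> (o == demand pref pv b) || prefE pref (demand pref pv b) o.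
Proof.
move=> /strict_linear_order_prefE slo b0.
have None_affordable : pv None <= b by rewrite pv_None.
have [m pm mmax] := strict_linear_order_max (P := fun o => pv o <= b) slo None_affordable.
rewrite /demand; case: pickP => [d /andP[_ /forallP dmax] o | /(_ m)].
  exact/implyP/dmax.
by rewrite pm /=; move/negbT/negP; case; apply/forallP => o; apply/implyP/mmax.
Qed.

Lemma measurable_demand_eq o : measurable [set b : R | demand pref pv b == o].
Proof.
pose G (k : {ffun option A -> bool}) := odflt None [pick o0 | k o0 &&
   [forall o', k o' ==> ((o' == o0) || prefE pref o0 o')]].
have demandE b : demand pref pv b = G [ffun o' => pv o' <= b].
  rewrite /demand /G; congr odflt; apply: eq_pick => o0 /=.
  by rewrite ffunE; congr andb; apply: eq_forallb => o'; rewrite ffunE.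
have -> : ([set b : R | demand pref pv b == o] =
   \bigcup_(k in [set k | G k == o])
      \bigcap_(o' in [set: option A]) [set b : R | (pv o' <= b) = k o'])%classic.
  apply/seteqP; split => b /=.
  - move=> hb; exists [ffun o' => pv o' <= b]; first by rewrite /= -demandE.
    by move=> o' _ /=; rewrite ffunE.
  - case=> k /= Gk kb; rewrite demandE (_ : [ffun _ => _] = k) //.
    by apply/ffunP => o'; rewrite ffunE; apply: kb.
apply: fin_bigcup_measurable; first exact: finite_finset.
move=> k _; apply: fin_bigcap_measurable; first exact: finite_finset.
have mle o' : measurable [set b : R | pv o' <= b].
  have := measurable_fun_le (D := setT) measurableT
     (measurable_cst (pv o')) (@measurable_id _ R setT).
  by rewrite setTI.
move=> o' _; case: (k o'); first exact: mle.
rewrite (_ : [set b | _ = false] = ~` [set b | pv o' <= b])%classic.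
  exact: measurableC (mle o').
by apply/seteqP; split => b /=; case: (pv o' <= b).
Qed.

Lemma sum_price_indic_demand b :
  \sum_a pv (Some a) * \1_[set b' | demand pref pv b' == Some a]%classic b =
  pv (demand pref pv b).
Proof.
case Db: (demand pref pv b) => [a0|].
  rewrite (bigD1 a0) //= big1 ?addr0 => [|a ne]; rewrite indicE.
    by rewrite mem_set ?mulr1 //= Db.
  by rewrite memNset ?mulr0 // /= Db; apply/negP; rewrite eq_sym.
by rewrite pv_None big1 // => a _; rewrite indicE memNset ?mulr0 // /= Db.
Qed.

End demand.

(* A price [pv c <= 1 - eps] would put [c] at or below the boundary candidate,
   so every candidate of [C] above the boundary would also beat [c]. *)
Lemma covered_unbeaten_price_gt (R : realType) (A : finType) (pref : rel A)
  (pv : option A -> R) (eps : R) (t : nat) (C : {set A}) (c : A) :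
  strict_linear_order pref -> pv None = 0 -> eps <= 1 ->
  t_covered pref pv eps t C -> ~~ tbeats pref t C c -> 1 - eps < pv (Some c).
Proof.
move=> slo pv_None eps1 covered; apply: contraNlt => pc_le.
have [_ [tr _]] := strict_linear_order_prefE slo.
have := demand_maximal pv_None slo (_ : 0 <= 1 - eps) pc_le.
rewrite subr_ge0 => /(_ eps1) c_le_av.
apply: leq_trans covered _; apply: subset_leq_card; rewrite /boundary.
apply/fintype.subsetP => z; rewrite !inE => /andP[-> z_gt_av] /=.
case/orP: c_le_av => [/eqP c_av|av_gt_c]; first by rewrite -c_av in z_gt_av.
exact: (tr _ (Some z) (Some c) z_gt_av av_gt_c).
Qed.

Section uniform_integral.
Local Open Scope ereal_scope.
Variables (R : realType) (lo hi : R) (lohi : (lo < hi)%R).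
Local Notation U := (uniform_prob lohi).
Local Notation I := (`[lo, hi]%classic : set R).

(* [integral_uniform] asks for [0 <= f] everywhere; the uniform density vanishes
   off [I], so nonnegativity on [I] suffices. *)
Lemma integral_uniform_itv (f : R -> \bar R) :
  measurable_fun setT f -> (forall x, I x -> 0 <= f x) ->
  \int[U]_x f x = ((hi - lo)^-1)%:E * \int[lebesgue_measure]_(x in I) f x.
Proof.
move=> mf f0; rewrite integralE.
rewrite integral_uniform; last 2 first.
- exact: measurable_funepos.
- by move=> x; exact: funepos_ge0.
rewrite integral_uniform; last 2 first.
- exact: measurable_funeneg.
- by move=> x; exact: funeneg_ge0.
rewrite [X in _ - _ * X]integral0_eq; last first.
  by move=> x Ix; apply: (ge0_funenegE f0); exact: mem_set.
rewrite mule0 sube0; congr (_ * _); apply: eq_integral => x Ix.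
exact: (ge0_funeposE f0).
Qed.

Lemma le_integral_uniform (f g : R -> \bar R) :
  measurable_fun setT f -> measurable_fun setT g ->
  (forall x, I x -> 0 <= f x <= g x) -> \int[U]_x f x <= \int[U]_x g x.
Proof.
move=> mf mg fg.
have f0 x : I x -> 0 <= f x by move=> /fg /andP[].
have g0 x : I x -> 0 <= g x by move=> /fg /andP[f0x /(le_trans f0x)].
rewrite !integral_uniform_itv //; apply: lee_wpmul2l.
  by rewrite lee_fin invr_ge0 subr_ge0 ltW.
apply: ge0_le_integral => //; try exact: measurable_funTS.
by move=> x /fg /andP[].
Qed.

Lemma integral_id_uniform_bounds : (0 <= lo)%R ->
  0 <= \int[U]_x x%:E <= hi%:E.
Proof.
move=> lo0.
have Ige0 x : I x -> (0 <= x)%R.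
  by rewrite /= in_itv /= => /andP[lox _]; exact: le_trans lox.
have int_cst r : \int[U]_x (cst r%:E x) = r%:E.
  by rewrite integral_cst // -[RHS]mule1; congr (_ * _); exact: probability_setT.
apply/andP; split.
  rewrite -[X in X <= _]/(0%:E) -(int_cst 0%R).
  apply: le_integral_uniform => // x Ix.
  by rewrite !lee_fin lexx Ige0.
rewrite -[X in _ <= X]int_cst; apply: le_integral_uniform => // x Ix.
by move: (Ix); rewrite !lee_fin Ige0 //= in_itv /= => /andP[].
Qed.

End uniform_integral.

Lemma Income_meanE (R : realType) (eps : R) (heps : 0 < eps) : eps <= 1 ->
  exists2 j : R, 0 <= j <= 1 & (\int[Income heps]_b b%:E = j%:E)%E.
Proof.
move=> eps1; have := integral_id_uniform_bounds (income_lt heps).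
rewrite subr_ge0 => /(_ eps1) /andP[J0 J1].
have J_fin : (\int[Income heps]_b b%:E)%E \is a fin_num.
  by rewrite ge0_fin_numE // (le_lt_trans J1) ?ltry.
by exists (fine (\int[Income heps]_b b%:E)%E); rewrite ?fineK // -!lee_fin fineK // J0.
Qed.

Lemma expected_spending_le_uniform (R : realType) (A : finType) (pref : rel A)
  (pv : option A -> R) (lo hi : R) (lohi : lo < hi) :
  0 <= lo -> pv None = 0 -> (forall o, 0 <= pv o) ->
  (\sum_a (pv (Some a))%:E * uniform_prob lohi [set b | demand pref pv b == Some a]
    <= \int[uniform_prob lohi]_b b%:E)%E.
Proof.
move=> lo0 pv_None pv_ge0.
set E := fun a => [set b : R | demand pref pv b == Some a]%classic.
have mE a : measurable (E a) := measurable_demand_eq pref pv (Some a).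
have m_term a : measurable_fun setT (fun b => (pv (Some a) * \1_(E a) b)%:E).
  by apply/measurable_EFinP; apply: measurable_funM => //; exact: measurable_indic.
have term_ge0 a b : (0 <= (pv (Some a) * \1_(E a) b)%:E)%E.
  by rewrite lee_fin mulr_ge0.
have -> : (\sum_a (pv (Some a))%:E * uniform_prob lohi (E a) =
    \int[uniform_prob lohi]_b (\sum_a (pv (Some a) * \1_(E a) b)%:E))%E.
  rewrite ge0_integral_sum //; apply: eq_bigr => a _.
  under eq_integral do rewrite EFinM.
  rewrite ge0_integralZl ?lee_fin ?integral_indic ?setIT //.
  - exact: mE.
  - by apply/measurable_EFinP; apply: measurable_indic; exact: mE.
apply: le_integral_uniform => //.
- exact: emeasurable_sum.
move=> b; rewrite /= in_itv /= => /andP[lob _].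
rewrite sume_ge0 //= sumEFin lee_fin sum_price_indic_demand //.
by apply: demand_affordable => //; exact: le_trans lob.
Qed.

Section optimal_allocation.
Variables (R : realFieldType) (A : finType) (w y : A -> R) (B : R).
Hypothesis y_bounds : forall a, 0 <= y a <= 1.
Hypothesis y_sum : \sum_a y a = B.
Hypothesis y_opt : forall z : A -> R, (forall a, 0 <= z a <= 1) ->
  \sum_a z a = B -> \sum_a w a * z a <= \sum_a w a * y a.

(* Moving mass [min (y a) (1 - y c)] from [a] to [c] stays feasible. *)
Lemma optimal_allocation_exchange c a : y c < 1 -> 0 < y a -> w c <= w a.
Proof.
move=> yc1 ya0; have [->//|ne] := eqVneq a c.
pose d := Order.min (y a) (1 - y c).
have d0 : 0 < d by rewrite lt_min ya0 subr_gt0.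
have dya : d <= y a by rewrite ge_min lexx.
have dyc : d <= 1 - y c by rewrite ge_min lexx orbT.
pose z a' := y a' + (if a' == c then d else 0) - (if a' == a then d else 0).
have sum_delta e : \sum_a' (if a' == e then d else 0) = d.
  by rewrite -big_mkcond big_pred1_eq.
have wsum_delta e : \sum_a' w a' * (if a' == e then d else 0) = w e * d.
  by rewrite (bigD1 e) //= eqxx big1 ?addr0 // => a' /negbTE ->; rewrite mulr0.
have z_bounds a' : 0 <= z a' <= 1.
  rewrite /z; have [-> | nc] := eqVneq a' c.
    have /andP[yc0 _] := y_bounds c.
    by rewrite eq_sym (negbTE ne) subr0; apply/andP; split; lra.
  have [-> | na] := eqVneq a' a; rewrite addr0.
    by have /andP[_ ya1] := y_bounds a; apply/andP; split; lra.
  by rewrite subr0 y_bounds.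
have z_sum : \sum_a' z a' = B by rewrite sumrB big_split /= y_sum !sum_delta addrK.
have := y_opt z_bounds z_sum.
under eq_bigr do rewrite mulrBr mulrDr.
rewrite sumrB big_split /= !wsum_delta => exchange_le.
by rewrite -(ler_pM2r d0); lra.
Qed.

Lemma optimal_allocation_ge c : y c < 1 -> w c * B <= \sum_a w a * y a.
Proof.
move=> yc1; rewrite -y_sum mulr_sumr; apply: ler_sum => a _.
have /andP[ya0 _] := y_bounds a; rewrite le_eqVlt in ya0.
case/orP: ya0 => [/eqP <-|ya_gt0]; first by rewrite !mulr0.
by rewrite ler_pM2r // optimal_allocation_exchange.
Qed.

End optimal_allocation.

Lemma revenue_complementary_slackness (R : comRingType) (V A : finType)
  (p x : V -> A -> R) (y : A -> R) (s : R) :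
  (forall v a, s * x v a = y a \/ p v a = 0) ->
  \sum_a (\sum_v p v a) * y a = s * \sum_v \sum_a p v a * x v a.
Proof.
move=> slack; under eq_bigr do rewrite mulr_suml.
rewrite exchange_big mulr_sumr; apply: eq_bigr => v _; rewrite mulr_sumr.
apply: eq_bigr => a _; case: (slack v a) => [<-|->]; last by rewrite !mul0r mulr0.
by rewrite mulrCA.
Qed.

Lemma card_mul_le_sum (R : numDomainType) (V : finType) (f : V -> R) (S : {set V}) (m : R) :
  (forall v, 0 <= f v) -> (forall v, v \in S -> m <= f v) -> #|S|%:R * m <= \sum_v f v.
Proof.
move=> f_ge0 f_ge_m; rewrite mulr_natl -sumr_const [X in _ <= X](bigID (mem S)) /=.
by rewrite -[X in X <= _]addr0 lerD ?sumr_ge0 // ler_sum.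
Qed.

Lemma SLEO_revenue_le (R : realType) (V A : finType) (pref : V -> rel A)
  (s B eps : R) (heps : 0 < eps) (p x : V -> option A -> R) (y : A -> R) (j : R) (c : A) :
  eps <= 1 -> is_SLEO pref s B heps p x y -> (\int[Income heps]_b b%:E = j%:E)%E ->
  y c < 1 -> (\sum_v p v (Some c)) * B <= s * (#|V|%:R * j).
Proof.
move=> eps1 [s0 [_ [[p_bounds p_None] [[_ y_bounds] [x_demand [[sx_le sx_lt] [y_sum y_opt]]]]]]].
move=> Jj yc1.
have spending v : \sum_a p v (Some a) * x v (Some a) <= j.
  rewrite -lee_fin -Jj -sumEFin; under eq_bigr do rewrite EFinM x_demand.
  apply: expected_spending_le_uniform => //; first by rewrite subr_ge0.
  by move=> o; have /andP[] := p_bounds v o.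
have slack v a : s * x v (Some a) = y a \/ p v (Some a) = 0.
  have [/sx_lt|sx_ge] := ltrP (s * x v (Some a)) (y a); first by right.
  by left; apply/le_anti; rewrite sx_le sx_ge.
apply: le_trans (optimal_allocation_ge y_bounds y_sum y_opt yc1) _.
rewrite (revenue_complementary_slackness (p := fun v a => p v (Some a))
  (x := fun v a => x v (Some a)) slack).
apply: ler_wpM2l; first exact: ltW.
apply: le_trans (ler_sum _ (fun v _ => spending v)) _.
by rewrite sumr_const mulr_natl.
Qed.

Theorem mainTheorem11 (R : realType) (V A : finType) (pref : V -> rel A)
  (gamma : R) (t : nat) (eps B : R) (heps : 0 < eps)
  (p : V -> option A -> R) (x : V -> option A -> R) (y : A -> R)
  (C : {set A}) :
  (0 < #|V|)%N ->
  (forall v, strict_linear_order (pref v)) ->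
  1 <= gamma -> (1 <= t)%N -> eps < 1 ->
  gamma * t%:R <= B -> B <= #|A|%:R ->
  is_SLEO pref (gamma * t%:R) B heps p x y ->
  (t <= #|C|)%N -> (forall a, y a = 1 -> a \in C) ->
  forall c, c \notin C ->
    ((\sum_v p v (Some c))%:E <=
       (gamma * t%:R * #|V|%:R / B)%:E * \int[Income heps]_b b%:E)%E /\
    #|[set v | t_covered (pref v) (p v) eps t C && ~~ tbeats (pref v) t C c]|%:R
      <= gamma * t%:R / (B * (1 - eps)) * #|V|%:R.
Proof.
move=> _ slo _ _ eps1 _ _ sleo _ y1_in_C c cC.
set s := gamma * t%:R in sleo *; set P := \sum_v p v (Some c).
have [s0 [B0 [[p_bounds p_None] [[_ y_bounds] _]]]] := sleo.
have yc1 : y c < 1.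
  rewrite lt_neqAle (andP (y_bounds c)).2 andbT.
  by apply: contraNneq cC; exact: y1_in_C.
have [j /andP[j0 j1] Jj] := Income_meanE heps (ltW eps1).
have P_le : P <= s * #|V|%:R * j / B.
  by rewrite ler_pdivlMr // -mulrA (SLEO_revenue_le (ltW eps1) sleo Jj yc1).
split; first by rewrite Jj -EFinM lee_fin mulrAC.
set S := [set v | _].
have card_le : #|S|%:R * (1 - eps) <= P.
  apply: (card_mul_le_sum (f := fun v => p v (Some c))) => [v|v]; first by have /andP[] := p_bounds v (Some c).
  rewrite inE => /andP[covered unbeaten]; apply: ltW.
  exact: covered_unbeaten_price_gt (slo v) (p_None v) (ltW eps1) covered unbeaten.
rewrite (_ : s / (B * (1 - eps)) * #|V|%:R = s * #|V|%:R / B / (1 - eps)); last first.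
  by rewrite invfM; ring.
rewrite ler_pdivlMr ?subr_gt0 // (le_trans card_le) // (le_trans P_le) //.
apply: ler_wpM2r; first by rewrite invr_ge0 ltW.
by rewrite ler_piMr // mulr_ge0 // ltW.
Qed.
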